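(* Let $A=(a_{ij})$ and $B=(b_{ij})$ be two $n\times n$ generalized tournament matrices with the same principal minors of orders $2$ and $3$. For all pairwise distinct $i,j,k\in[n]$: (i) if $\{i,j\}\in P_{\neq}$ and $\{i,k\},\{j,k\}\in P_{=}$, then $a_{ik}=a_{jk}=b_{ik}=b_{jk}$; (ii) if $\{i,j\}\in P_{=}$ and $\{i,k\},\{j,k\}\in P_{\neq}$, then $a_{ik}=a_{jk}=1-b_{ik}=1-b_{jk}$; (iii) if $\{i,j\}\in P_{=}$ and $\{i,k\},\{j,k\}\notin P_{=}$, then $a_{ik}=1/2$ if and only if $a_{jk}=1/2$; (iv) if $\{i,j\}\in P_{\neq}$ and $\{i,k\},\{j,k\}\notin P_{\neq}$, then $a_{ik}=1/2$ if and only if $a_{jk}=1/2$.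
   Context: A generalized tournament matrix of order $n$ is a real $n\times n$ matrix $M=(m_{ij})$ with nonnegative entries satisfying $M+M^{t}=J_n-I_n$ ($J_n$ the all-ones matrix, $I_n$ the identity). Write $[n]=\{1,\ldots,n\}$. When $A$ and $B$ have the same principal minors of order $2$, for all $i\neq j$ one has $a_{ij}=b_{ij}$ or $a_{ij}=1-b_{ij}$, and the set of $2$-subsets of $[n]$ is partitioned into $P_{=}=\{\{i,j\}: a_{ij}=b_{ij},\ a_{ij}\neq 1/2\}$, $P_{\neq}=\{\{i,j\}: a_{ij}=1-b_{ij},\ a_{ij}\neq 1/2\}$, and $P_{1/2}=\{\{i,j\}: a_{ij}=b_{ij}=1/2\}$. *)

From mathcomp Require Import all_boot all_order all_algebra.
Set Implicit Arguments. Unset Strict Implicit. Unset Printing Implicit Defensive.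
Import Order.TTheory GRing.Theory Num.Theory.
Local Open Scope ring_scope.

Definition gen_tournament (R : numDomainType) (n : nat) (M : 'M[R]_n) : Prop :=
  (forall i j, 0 <= M i j) /\ (forall i j, M i j + M j i = (i != j)%:R).

Definition principal_submx (R : ringType) (n : nat) (M : 'M[R]_n)
    (S : {set 'I_n}) : 'M[R]_#|S| :=
  mxsub (fun i : 'I_#|S| => enum_val i) (fun i : 'I_#|S| => enum_val i) M.

Definition same_pminors (R : comRingType) (n k : nat) (A B : 'M[R]_n) : Prop :=
  forall S : {set 'I_n}, #|S| = k ->
    \det (principal_submx A S) = \det (principal_submx B S).

Definition in_Peq (R : fieldType) (n : nat) (A B : 'M[R]_n) (i j : 'I_n) : Prop :=
  A i j = B i j /\ A i j <> 2^-1.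
Definition in_Pneq (R : fieldType) (n : nat) (A B : 'M[R]_n) (i j : 'I_n) : Prop :=
  A i j = 1 - B i j /\ A i j <> 2^-1.

From mathcomp Require Import all_boot all_order all_algebra.
From mathcomp Require Import ring.
Set Implicit Arguments. Unset Strict Implicit. Unset Printing Implicit Defensive.
Import Order.TTheory GRing.Theory Num.Theory.
Local Open Scope ring_scope.

(* A generalized tournament has zero diagonal and m_ji = 1 - m_ij, so its
   principal minors on {i, j} and {i, j, k} only depend on x = m_ij,
   y = m_jk, w = m_ik: they are -x(1 - x) and
   T(x, y, w) = x y (1 - w) + w (1 - y) (1 - x).  Equal 2-minors give
   b = a or b = 1 - a entrywise.  Since
   T(x, y, w) - T(1 - x, y, w) = (2x - 1)(y - w) and
   T(x, 1 - y, 1 - w) = T(1 - x, y, w), equal 3-minors force y = w whenever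
   x <> 1/2 and {i, j} is flipped (b = 1 - a) while {i, k}, {j, k} are not,
   or conversely.  Outside P_= (resp. P_neq) an entry of B is 1 - a
   (resp. a) even when a = 1/2, so all four items are instances of this. *)

(* [expand_det_row] produces indices [lift i j] and [ord0] that are not
   syntactically the numerals [0], [1], [2] of ['I_m]. *)
Ltac ord_literals :=
  repeat match goal with
  | |- context [@lift ?m ?i ?j] =>
      first [ rewrite (_ : @lift m i j = 0); last exact/val_inj
            | rewrite (_ : @lift m i j = 1); last exact/val_inj
            | rewrite (_ : @lift m i j = 2%:R); last exact/val_inj ]
  | |- context [@ord0 ?m] => rewrite (_ : @ord0 m = 0); last exact/val_inj
  end.

Lemma det_mx2 (R : comNzRingType) (N : 'M[R]_2) :
  \det N = N 0 0 * N 1 1 - N 0 1 * N 1 0.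
Proof.
rewrite (expand_det_row _ 0) !big_ord_recl big_ord0 /cofactor !det_mx11 !mxE /=.
by ord_literals; rewrite expr0 expr1; ring.
Qed.

Lemma det_mx3 (R : comNzRingType) (N : 'M[R]_3) : \det N =
    N 0 0 * N 1 1 * N 2 2 + N 0 1 * N 1 2 * N 2 0 + N 0 2 * N 1 0 * N 2 1
  - N 0 0 * N 1 2 * N 2 1 - N 0 1 * N 1 0 * N 2 2 - N 0 2 * N 1 1 * N 2 0.
Proof.
rewrite (expand_det_row _ 0) !big_ord_recl big_ord0 /cofactor !det_mx2 !mxE /=.
by ord_literals; rewrite /bump /=; ring.
Qed.

Lemma mem_set3 (T : finType) (a b c x : T) :
  x \in [set a; b; c] -> [\/ x = a, x = b | x = c].
Proof. by rewrite !inE => /orP[/orP[]|] /eqP; [constructor 1 | constructor 2 | constructor 3]. Qed.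

Lemma cards3 (T : finType) (a b c : T) : a != b -> a != c -> b != c ->
  #|[set a; b; c]| = 3.
Proof. by move=> ab ac bc; rewrite -setUA cardsU1 cards2 bc !inE negb_or ab ac. Qed.

Section ZeroDiagonal.
Variables (R : comNzRingType) (n : nat) (M : 'M[R]_n).
Hypothesis M_diag0 : forall x, M x x = 0.

Lemma det_mxsub2_diag0 (f : 'I_2 -> 'I_n) :
  \det (mxsub f f M) = - (M (f 0) (f 1) * M (f 1) (f 0)).
Proof. by rewrite det_mx2 !mxE !M_diag0; ring. Qed.

Lemma det_mxsub3_diag0 (f : 'I_3 -> 'I_n) :
  \det (mxsub f f M) = M (f 0) (f 1) * M (f 1) (f 2) * M (f 2) (f 0)
                     + M (f 0) (f 2) * M (f 2) (f 1) * M (f 1) (f 0).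
Proof. by rewrite det_mx3 !mxE !M_diag0; ring. Qed.

Lemma principal_submx_enum (S : {set 'I_n}) (k : nat) : #|S| = k ->
  exists f : 'I_k -> 'I_n, [/\ injective f, forall x, f x \in S &
    \det (principal_submx M S) = \det (mxsub f f M)].
Proof. by move=> <-; exists enum_val; split => //; [exact: enum_val_inj | exact: enum_valP]. Qed.

Lemma principal_minor2 (i j : 'I_n) : i != j ->
  \det (principal_submx M [set i; j]) = - (M i j * M j i).
Proof.
move=> ij; have /principal_submx_enum[f [f_inj fS ->]] : #|[set i; j]| = 2.
  by rewrite cards2 ij.
have f01 : f 0 != f 1 by rewrite (inj_eq f_inj).
rewrite det_mxsub2_diag0; move: f01.
by case/set2P: (fS 0) => ->; case/set2P: (fS 1) => ->; rewrite ?eqxx // => _; ring.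
Qed.

Lemma principal_minor3 (i j k : 'I_n) : i != j -> i != k -> j != k ->
  \det (principal_submx M [set i; j; k]) =
    M i j * M j k * M k i + M i k * M k j * M j i.
Proof.
move=> ij ik jk; have [f [f_inj fS ->]] := principal_submx_enum (cards3 ij ik jk).
have f01 : f 0 != f 1 by rewrite (inj_eq f_inj).
have f02 : f 0 != f 2%:R by rewrite (inj_eq f_inj).
have f12 : f 1 != f 2%:R by rewrite (inj_eq f_inj).
rewrite det_mxsub3_diag0; move: f01 f02 f12.
by case/mem_set3: (fS 0) => ->; case/mem_set3: (fS 1) => ->;
  case/mem_set3: (fS 2%:R) => ->; rewrite ?eqxx // => _ _ _; ring.
Qed.
End ZeroDiagonal.

Definition triple_minor (R : comNzRingType) (x y w : R) :=
  x * y * (1 - w) + w * (1 - y) * (1 - x).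

Section GeneralizedTournament.
Variables (R : numDomainType) (n : nat) (M : 'M[R]_n).
Hypothesis M_tour : gen_tournament M.

Lemma gen_tournament_diag x : M x x = 0.
Proof.
have := M_tour.2 x x; rewrite eqxx -mulr2n => /eqP.
by rewrite mulrn_eq0 => /eqP.
Qed.

Lemma gen_tournament_sym x y : x != y -> M y x = 1 - M x y.
Proof.
by move=> xy; have := M_tour.2 x y; rewrite xy mulr1n => <-; rewrite addrAC subrr add0r.
Qed.

Lemma gen_tournament_minor2 i j : i != j ->
  \det (principal_submx M [set i; j]) = - (M i j * (1 - M i j)).
Proof.
by move=> ij; rewrite principal_minor2 ?(gen_tournament_sym ij) //; exact: gen_tournament_diag.
Qed.

Lemma gen_tournament_minor3 i j k : i != j -> i != k -> j != k ->
  \det (principal_submx M [set i; j; k]) = triple_minor (M i j) (M j k) (M i k).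
Proof.
move=> ij ik jk; rewrite principal_minor3 //; last exact: gen_tournament_diag.
rewrite (gen_tournament_sym ij) (gen_tournament_sym ik) (gen_tournament_sym jk).
by rewrite /triple_minor; ring.
Qed.

End GeneralizedTournament.

Lemma mul_compl_eq (R : idomainType) (a b : R) :
  a * (1 - a) = b * (1 - b) -> b = a \/ b = 1 - a.
Proof.
move=> E; have /eqP : (b - a) * (b - (1 - a)) = 0.
  by rewrite -(subrr (a * (1 - a))) {2}E; ring.
by rewrite mulf_eq0 !subr_eq0 => /orP[] /eqP; [left | right].
Qed.

Lemma subr_half (R : numFieldType) : 1 - 2^-1 = 2^-1 :> R.
Proof. by rewrite {1}(splitr 1) mul1r addrK. Qed.

Lemma triple_minor_compl (R : comNzRingType) (x y w : R) :
  triple_minor x (1 - y) (1 - w) = triple_minor (1 - x) y w.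
Proof. by rewrite /triple_minor; ring. Qed.

Lemma triple_minor_flip (R : numFieldType) (x y w : R) : x <> 2^-1 ->
  triple_minor x y w = triple_minor (1 - x) y w -> y = w.
Proof.
move=> x_half E; have /eqP : (2 * x - 1) * (y - w) = 0.
  by rewrite -(subrr (triple_minor x y w)) {2}E /triple_minor; ring.
rewrite mulf_eq0 !subr_eq0 => /orP[/eqP x2 | /eqP //]; case: x_half.
have two_neq0 : 2 != 0 :> R by rewrite pnatr_eq0.
by rewrite -[x](mulKf two_neq0) x2 mulr1.
Qed.

Lemma in_Peq_entry (R : fieldType) n (A B : 'M[R]_n) p q :
  in_Peq A B p q -> B p q = A p q.
Proof. by case. Qed.

Lemma in_Pneq_entry (R : fieldType) n (A B : 'M[R]_n) p q :
  in_Pneq A B p q -> B p q = 1 - A p q.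
Proof. by case=> -> _; rewrite subKr. Qed.

Section SamePrincipalMinors.
Variables (R : numFieldType) (n : nat) (A B : 'M[R]_n).
Hypotheses (A_tour : gen_tournament A) (B_tour : gen_tournament B).
Hypotheses (AB2 : same_pminors 2 A B) (AB3 : same_pminors 3 A B).

Lemma same_pminors2_entry p q : p != q -> B p q = A p q \/ B p q = 1 - A p q.
Proof.
move=> pq; apply: mul_compl_eq; apply: oppr_inj.
by rewrite -!gen_tournament_minor2 // AB2 // cards2 pq.
Qed.

Lemma not_in_Peq_entry p q : p != q -> ~ in_Peq A B p q -> B p q = 1 - A p q.
Proof.
move=> pq not_Peq; case: (same_pminors2_entry pq) => // BA.
have [A_half | A_nhalf] := eqVneq (A p q) 2^-1; first by rewrite BA A_half subr_half.
by case: not_Peq; split; [rewrite BA | exact/eqP].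
Qed.

Lemma not_in_Pneq_entry p q : p != q -> ~ in_Pneq A B p q -> B p q = A p q.
Proof.
move=> pq not_Pneq; case: (same_pminors2_entry pq) => // BA.
have [A_half | A_nhalf] := eqVneq (A p q) 2^-1; first by rewrite BA A_half subr_half.
by case: not_Pneq; split; [rewrite BA subKr | exact/eqP].
Qed.

Variables (i j k : 'I_n).
Hypotheses (ij : i != j) (ik : i != k) (jk : j != k).

Lemma same_pminors3_triple :
  triple_minor (A i j) (A j k) (A i k) = triple_minor (B i j) (B j k) (B i k).
Proof. by rewrite -!gen_tournament_minor3 // AB3 // cards3. Qed.

Lemma flip_ij_eq_entries : A i j <> 2^-1 ->
  B i j = 1 - A i j -> B j k = A j k -> B i k = A i k -> A j k = A i k.
Proof.
move=> A_nhalf Bij Bjk Bik; apply: (triple_minor_flip A_nhalf).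
by rewrite same_pminors3_triple Bij Bjk Bik.
Qed.

Lemma flip_jk_ik_eq_entries : A i j <> 2^-1 ->
  B i j = A i j -> B j k = 1 - A j k -> B i k = 1 - A i k -> A j k = A i k.
Proof.
move=> A_nhalf Bij Bjk Bik; apply: (triple_minor_flip A_nhalf).
by rewrite -triple_minor_compl same_pminors3_triple Bij Bjk Bik.
Qed.

End SamePrincipalMinors.

Theorem lemma4p2 (R : realFieldType) (n : nat) (A B : 'M[R]_n) :
  gen_tournament A -> gen_tournament B ->
  same_pminors 2 A B -> same_pminors 3 A B ->
  forall i j k : 'I_n, i != j -> i != k -> j != k ->
  [/\ (in_Pneq A B i j -> in_Peq A B i k -> in_Peq A B j k ->
         A i k = A j k /\ A j k = B i k /\ B i k = B j k),
      (in_Peq A B i j -> in_Pneq A B i k -> in_Pneq A B j k ->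
         A i k = A j k /\ A j k = 1 - B i k /\ 1 - B i k = 1 - B j k),
      (in_Peq A B i j -> ~ in_Peq A B i k -> ~ in_Peq A B j k ->
         (A i k = 2^-1 <-> A j k = 2^-1)) &
      (in_Pneq A B i j -> ~ in_Pneq A B i k -> ~ in_Pneq A B j k ->
         (A i k = 2^-1 <-> A j k = 2^-1))].
Proof.
move=> A_tour B_tour AB2 AB3 i j k ij ik jk.
have flip_ij := flip_ij_eq_entries A_tour B_tour AB3 ij ik jk.
have flip_jk_ik := flip_jk_ik_eq_entries A_tour B_tour AB3 ij ik jk.
have not_Peq := not_in_Peq_entry A_tour B_tour AB2.
have not_Pneq := not_in_Pneq_entry A_tour B_tour AB2.
split.
- move=> Pij /in_Peq_entry Bik /in_Peq_entry Bjk.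
  by rewrite Bik Bjk (flip_ij Pij.2 (in_Pneq_entry Pij) Bjk Bik).
- move=> Pij /in_Pneq_entry Bik /in_Pneq_entry Bjk.
  by rewrite Bik Bjk (flip_jk_ik Pij.2 (in_Peq_entry Pij) Bjk Bik) subKr.
- move=> Pij /(not_Peq _ _ ik) Bik /(not_Peq _ _ jk) Bjk.
  by rewrite (flip_jk_ik Pij.2 (in_Peq_entry Pij) Bjk Bik).
- move=> Pij /(not_Pneq _ _ ik) Bik /(not_Pneq _ _ jk) Bjk.
  by rewrite (flip_ij Pij.2 (in_Pneq_entry Pij) Bjk Bik).
Qed.
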